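(* For all even $m\geq 2$ one has \begin{enumerate} \item $S_m^0\odot \mu = -S_m^0\,\mu$; \item The mapping $(\mathbb{Q}^\mathscr{P},\odot)\to(\mathbb{Q}^\mathscr{P},\odot),\ f\mapsto S_m\,|\, f$ is a derivation, uniquely determined on $\mathcal{T}$ by $S_m\,|\, T_{k,l} = T_{k+m-1,l+1}$. \end{enumerate}
   Context: $\mathscr{P}$ is the set of partitions and $r_m(\lambda)$ the number of parts of $\lambda$ equal to $m$. $S_m(\lambda)=-\frac{B_m}{2m}+\sum_i\lambda_i^{m-1}$ for even $m$, and $S_m^0=S_m-S_m(\emptyset)$. $\mu:\mathscr{P}\to\{-1,0,1\}$ is given by $\mu(\lambda)=(-1)^{\ell(\lambda)}$ if $\lambda$ is strict (no repeated parts) and $0$ otherwise; $S_m^0\mu$ is the pointwise product. The induced product $\odot$ is defined by $\langle f\odot g\rangle_{\vec u}=\langle f\rangle_{\vec u}\langle g\rangle_{\vec u}$ with $\langle f\rangle_{\vec u}=\sum_\lambda f(\lambda)u_{\lambda_1}u_{\lambda_2}\cdots/\sum_\lambda u_{\lambda_1}u_{\lambda_2}\cdots$; equivalently $(f\odot g)(\lambda)=\sum_{\alpha\cup\beta\cup\gamma=\lambda}f(\alpha)g(\beta)\mu(\gamma)$ (multiset unions). The connected product of two functions is $S_m|f=S_mf-S_m\odot f$. The Faulhaber polynomial $F_l$ is the polynomial with zero constant term with $F_l(n)=\sum_{i=1}^n i^{l-1}$ for $n\ge1$; $T_{k,l}(\lambda)=-\frac{B_{k+l}}{2(k+l)}(\delta_{l,1}+\delta_{k,0})+\sum_{m'\ge1}m'^kF_l(r_{m'}(\lambda))$,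 and $\mathcal{T}$ is the algebra generated by the $T_{k,l}$, which has a basis of induced products $T_{k_1,l_1}\odot\cdots\odot T_{k_n,l_n}$. *)

From HB Require Import structures.
From mathcomp Require Import all_boot all_order all_algebra.
Set Implicit Arguments. Unset Strict Implicit. Unset Printing Implicit Defensive.
Import Order.TTheory GRing.Theory Num.Theory.
Local Open Scope ring_scope.

Definition is_part (s : seq nat) : bool :=
  sorted geq s && all (fun x => (0 < x)%N) s.

Record part := Part { pval :> seq nat; pvalP : is_part pval }.
HB.instance Definition _ := [isSub for pval].
HB.instance Definition _ := [Equality of part by <:].

Lemma mkpart_proof (s : seq nat) :
  is_part (sort geq [seq x <- s | (0 < x)%N]).
Proof.
apply/andP; split.
  by apply: sort_sorted => x y; apply: leq_total.
by rewrite all_sort; apply/allP => x; rewrite mem_filter => /andP [].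
Qed.

Definition mkpart (s : seq nat) : part := Part (mkpart_proof s).

Definition empty_part : part := mkpart [::].

Fixpoint allbits (n : nat) : seq bitseq :=
  if n is n'.+1 then [seq b :: t | b <- [:: true; false], t <- allbits n']
  else [:: [::]].

Definition submultisets (la : part) : seq part :=
  undup [seq mkpart (mask b la) | b <- allbits (size la)].

Definition mdiff (l a : seq nat) : seq nat := foldr (fun x s => rem x s) l a.

Definition mu (la : part) : rat :=
  if uniq la then (-1) ^+ size la else 0.

(* induced product:
   (f . g)(la) = sum over alpha U beta U gamma = la (multiset unions)
                 of f(alpha) g(beta) mu(gamma) *)
Definition odot (f g : part -> rat) (la : part) : rat :=
  \sum_(a <- submultisets la)
    \sum_(b <- submultisets (mkpart (mdiff la a)))
       f a * g b * mu (mkpart (mdiff (mdiff la a) b)).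

(* Bernoulli numbers, B_0 = 1, sum_{j<=n} C(n+1,j) B_j = 0 for n >= 1
   (so B_1 = -1/2). *)
Fixpoint bern_list (n : nat) : seq rat :=
  if n is n'.+1 then
    let s := bern_list n' in
    rcons s (- (n'.+2)%:R^-1 *
             \sum_(j < n'.+1) ('C(n'.+2, j))%:R * nth 0 s j)
  else [:: 1].

Definition bernoulli (n : nat) : rat := nth 0 (bern_list n) n.

Definition S (m : nat) (la : part) : rat :=
  - bernoulli m / (2 * m)%:R + \sum_(x <- la) (x ^ (m - 1))%:R.

Definition S0 (m : nat) (la : part) : rat := S m la - S m empty_part.

Definition r (m : nat) (la : part) : nat := count_mem m (pval la).

(* Faulhaber polynomial F_l evaluated at n : nat (F_l(0) = 0) *)
Definition F (l n : nat) : rat := \sum_(1 <= i < n.+1) (i ^ (l - 1))%:R.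

(* T_{k,l}; the sum over m' >= 1 only has nonzero terms for m' a part *)
Definition T (k l : nat) (la : part) : rat :=
  - bernoulli (k + l) / (2 * (k + l))%:R * ((l == 1%N)%:R + (k == 0%N)%:R)
  + \sum_(m' <- undup (pval la)) (m' ^ k)%:R * F l (r m' la).

Definition conn (m : nat) (f : part -> rat) (la : part) : rat :=
  S m la * f la - odot (S m) f la.

Inductive inT : (part -> rat) -> Prop :=
| inT1 : inT (fun _ => 1)
| inTT k l : (0 < l)%N -> inT (T k l)
| inTD f g : inT f -> inT g -> inT (fun la => f la + g la)
| inTZ (a : rat) f : inT f -> inT (fun la => a * f la)
| inTM f g : inT f -> inT g -> inT (odot f g).

(* Write (f ⋆ g)(λ) = Σ_{α ⊆ λ} f(α) g(λ∖α) for the convolution over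
   sub-multisets. It is commutative and associative with unit δ (the indicator
   of the empty partition), μ is the ⋆-inverse of the constant function 1, and
   f ⊙ g = f ⋆ g ⋆ μ. Since S_m^0 is additive on multisets, multiplication by
   S_m^0 is a derivation of ⋆; applied to μ ⋆ 1 = δ it gives
   S_m^0 μ = - S_m^0 ⋆ μ ⋆ μ = - S_m^0 ⊙ μ, which is (1). The constant term of
   S_m cancels in S_m | f, and S_m | f = (S_m^0 (f ⋆ μ)) ⋆ 1, so linearity and
   the Leibniz rule for ⊙ follow from the derivation property. For (2c),
   T_{k,l} ⋆ μ is a multiple of δ plus the function with value n^k i^(l-1) on
   the rectangular partition (n^i) and 0 elsewhere; S_m^0 kills δ and
   multiplies that value by i n^(m-1). A derivation vanishes on 1, so two
   derivations that agree on the T_{k,l} agree on the algebra they generate. *)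

From HB Require Import structures.
From mathcomp Require Import all_boot all_algebra zify ring.
From Stdlib Require Import FunctionalExtensionality.
Import GRing.Theory Num.Theory.
Local Open Scope ring_scope.
Set Implicit Arguments. Unset Strict Implicit. Unset Printing Implicit Defensive.

Lemma big_reindex_uniq (R : nmodType) (I J : eqType) (s : seq I) (t : seq J)
    (h : I -> J) (F : J -> R) :
  uniq s -> uniq t -> {in s &, injective h} -> map h s =i t ->
  \sum_(x <- s) F (h x) = \sum_(y <- t) F y.
Proof.
move=> s_uniq t_uniq h_inj hs_t; rewrite -(big_map h predT); apply: perm_big.
by apply: uniq_perm; rewrite ?map_inj_in_uniq.
Qed.

Lemma uniq_pairs_dep (S T : eqType) (s : seq S) (t : S -> seq T) :
  uniq s -> (forall x, uniq (t x)) -> uniq [seq (x, y) | x <- s, y <- t x].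
Proof.
by move=> s_uniq t_uniq; apply: allpairs_uniq_dep => // -[x y] [x' y'] _ _ /= [-> ->].
Qed.

Lemma undup_nseq (T : eqType) i (x : T) : undup (nseq i.+1 x) = [:: x].
Proof. by elim: i => // i IHi; rewrite -{1}IHi /= inE eqxx. Qed.

Lemma undup_eq_seq1 (T : eqType) (s : seq T) x : undup s = [:: x] -> s = nseq (size s) x.
Proof. by move=> undup_s; apply/all_pred1P/allP => y; rewrite -mem_undup undup_s inE. Qed.

Lemma count_mem_mdiff n (l a : seq nat) :
  count_mem n (mdiff l a) = (count_mem n l - count_mem n a)%N.
Proof.
elim: a => [|x a IHa] /=; first by rewrite subn0.
by rewrite count_mem_rem IHa -subnDA addnC.
Qed.

Lemma mem_allbits n (b : bitseq) : (b \in allbits n) = (size b == n).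
Proof.
elim: n b => [|n IHn] [|x b] //=; rewrite !mem_cat orbF.
  by apply/negP => /orP[] /mapP[].
rewrite eqSS -IHn; apply/orP/idP => [[] /mapP[t t_bits [_ ->]] // | b_bits].
by case: x; [left | right]; apply/mapP; exists b.
Qed.

Lemma part_gt0 (la : part) : all (fun x => 0 < x)%N la.
Proof. by case: la => s /= /andP []. Qed.

Lemma part_sorted (la : part) : sorted geq la.
Proof. by case: la => s /= /andP []. Qed.

Lemma r0 (la : part) : r 0 la = 0%N.
Proof. by apply/count_memPn/negP => /(allP (part_gt0 la)). Qed.

Lemma r_gt0 n (la : part) : (0 < r n la)%N = (n \in pval la).
Proof. by rewrite -has_count has_pred1. Qed.

Lemma r_empty n : r n empty_part = 0%N.
Proof. by []. Qed.

Lemma partP (a b : part) : (forall n, (0 < n)%N -> r n a = r n b) -> a = b.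
Proof.
move=> eq_r; apply: val_inj.
have geq_trans : transitive geq by move=> y x z /= *; apply: (leq_trans (n := y)).
have geq_anti : antisymmetric geq by move=> x y /andP[? ?]; apply: anti_leq; apply/andP.
apply: (sorted_eq geq_trans geq_anti); rewrite ?part_sorted //.
by apply/allP => -[|n] _ /=; rewrite -?/(r _ _) ?r0 ?eq_r.
Qed.

Lemma r_mkpart n (s : seq nat) : (0 < n)%N -> r n (mkpart s) = count_mem n s.
Proof.
move=> n_gt0; rewrite /r /= (permP (permEl (perm_sort _ _))) count_filter.
by apply: eq_count => x /=; case: eqP => // ->.
Qed.

Definition part_diff (la a : part) : part := mkpart (mdiff la a).
Definition part_union (a b : part) : part := mkpart (a ++ b).

Lemma r_diff n (la a : part) : r n (part_diff la a) = (r n la - r n a)%N.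
Proof. by case: n => [|n]; rewrite ?r0 // r_mkpart // count_mem_mdiff. Qed.

Lemma r_union n (a b : part) : r n (part_union a b) = (r n a + r n b)%N.
Proof. by case: n => [|n]; rewrite ?r0 // r_mkpart // count_cat. Qed.

Definition subpart (a la : part) : Prop := forall n, (r n a <= r n la)%N.

Lemma mem_submultisets (la a : part) : a \in submultisets la <-> subpart a la.
Proof.
rewrite mem_undup; split=> [/mapP[b _ ->] n | /count_maskP[b size_b a_b]].
  by case: n => [|n]; rewrite ?r0 // r_mkpart // leq_count_mask.
apply/mapP; exists b; first by rewrite mem_allbits size_b.
by apply: partP => n n_gt0; rewrite r_mkpart // -(permP a_b).
Qed.

Lemma uniq_submultisets (la : part) : uniq (submultisets la).
Proof. exact: undup_uniq. Qed.
#[local] Hint Resolve uniq_submultisets : core.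

Lemma part_diffK (la a : part) : subpart a la -> part_diff la (part_diff la a) = a.
Proof. by move=> a_la; apply: partP => n _; rewrite !r_diff; have := a_la n; lia. Qed.

Lemma part_union_diff (a b : part) : part_diff (part_union a b) a = b.
Proof. by apply: partP => n _; rewrite r_diff r_union; lia. Qed.

Lemma part_diffKC (d a : part) : subpart a d -> part_union a (part_diff d a) = d.
Proof. by move=> a_d; apply: partP => n _; rewrite r_union r_diff; have := a_d n; lia. Qed.

Lemma part_diff_union (la a b : part) :
  part_diff la (part_union a b) = part_diff (part_diff la a) b.
Proof. by apply: partP => n _; rewrite !r_diff r_union; lia. Qed.

Lemma subpart_diff (la a : part) : subpart (part_diff la a) la.
Proof. by move=> n; rewrite r_diff leq_subr. Qed.

Lemma part_diff_eq0 (la a : part) :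
  subpart a la -> (part_diff la a == empty_part) = (a == la).
Proof.
move=> a_la; apply/eqP/eqP => [diff0 | ->].
  by apply: partP => n _; have := congr1 (r n) diff0; rewrite r_diff r_empty; have := a_la n; lia.
by apply: partP => n _; rewrite r_diff subnn.
Qed.

Lemma perm_part_diff (la a : part) : subpart a la -> perm_eq la (a ++ part_diff la a).
Proof.
move=> a_la; apply/allP => n _; apply/eqP; rewrite count_cat -!/(r _ _) r_diff.
by have := a_la n; lia.
Qed.

(** * Convolution over sub-multisets *)

Definition conv (f g : part -> rat) (la : part) : rat :=
  \sum_(a <- submultisets la) f a * g (part_diff la a).

Local Infix "⋆" := conv (at level 40, left associativity).

Local Notation one := (fun _ : part => 1 : rat).

Definition delta (la : part) : rat := (la == empty_part)%:R.

Lemma big_submultisets_involution (la : part) (h : part -> part) (F : part -> rat) :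
  (forall a, subpart a la -> subpart (h a) la) ->
  (forall a, subpart a la -> h (h a) = a) ->
  \sum_(a <- submultisets la) F (h a) = \sum_(a <- submultisets la) F a.
Proof.
move=> h_sub hK; apply: big_reindex_uniq => //.
  by apply: (can_in_inj (g := h)) => a /mem_submultisets/hK.
move=> a; apply/mapP/idP => [[b /mem_submultisets/h_sub ? ->] | /mem_submultisets a_la].
  exact/mem_submultisets.
by exists (h a); rewrite ?hK //; apply/mem_submultisets/h_sub.
Qed.

Lemma convC (f g : part -> rat) : f ⋆ g = g ⋆ f.
Proof.
apply: functional_extensionality => la; rewrite /conv.
rewrite -(big_submultisets_involution _ (h := part_diff la)) => [|a _|]; last exact: part_diffK.
  by apply: eq_big_seq => a /mem_submultisets a_la; rewrite part_diffK // mulrC.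
exact: subpart_diff.
Qed.

Lemma convA (f g h : part -> rat) : f ⋆ (g ⋆ h) = f ⋆ g ⋆ h.
Proof.
apply: functional_extensionality => la.
pose F (p : part * part) := f p.2 * g (part_diff p.1 p.2) * h (part_diff la p.1).
have -> : (f ⋆ (g ⋆ h)) la = \sum_(p <- [seq (a, b) | a <- submultisets la,
                                       b <- submultisets (part_diff la a)])
                             F (part_union p.1 p.2, p.1).
  rewrite big_allpairs_dep; apply: eq_bigr => a _; rewrite /conv mulr_sumr.
  by apply: eq_bigr => b _; rewrite /F /= part_union_diff part_diff_union mulrA.
have -> : (f ⋆ g ⋆ h) la =
          \sum_(p <- [seq (d, a) | d <- submultisets la, a <- submultisets d]) F p.
  by rewrite big_allpairs_dep; apply: eq_bigr => d _; rewrite /conv mulr_suml.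
apply: big_reindex_uniq; rewrite ?uniq_pairs_dep //.
  move=> [a b] [a' b'] _ _ /pair_equal_spec[/= eq_union eq_a]; subst a'.
  by rewrite -(part_union_diff a b) eq_union part_union_diff.
move=> [d a]; apply/mapP/allpairsPdep => [[_ /allpairsPdep[a' [b [a_la b_la ->]]] [-> ->]] |
                                          [d' [a' [d_la a_d [-> ->]]]]].
  move/mem_submultisets: a_la => a_la; move/mem_submultisets: b_la => b_la.
  exists (part_union a' b), a'; split => //; apply/mem_submultisets => n; rewrite r_union;
    by have := a_la n; have := b_la n; rewrite r_diff; lia.
move/mem_submultisets: d_la => d_la; move/mem_submultisets: a_d => a_d.
exists (a', part_diff d' a'); last by rewrite /= part_diffKC.
apply/allpairsPdep; exists a', (part_diff d' a'); split => //; apply/mem_submultisets => n.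
  by have := d_la n; have := a_d n; lia.
by rewrite !r_diff; have := d_la n; have := a_d n; lia.
Qed.

Lemma conv_delta (f : part -> rat) : f ⋆ delta = f.
Proof.
apply: functional_extensionality => la; rewrite /conv (bigD1_seq la) //=; last first.
  by apply/mem_submultisets.
rewrite big1_seq ?addr0 => [|a /andP[a_neq /mem_submultisets a_la]].
  by rewrite /delta part_diff_eq0 // eqxx mulr1.
by rewrite /delta part_diff_eq0 // (negbTE a_neq) mulr0.
Qed.

Lemma convDl (f g h : part -> rat) : (f \+ g) ⋆ h = f ⋆ h \+ g ⋆ h.
Proof.
apply: functional_extensionality => la.
by rewrite /conv /= -big_split; apply: eq_bigr => a _; rewrite mulrDl.
Qed.

Lemma convZl (c : rat) (f g : part -> rat) : (c \*o f) ⋆ g = c \*o (f ⋆ g).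
Proof.
apply: functional_extensionality => la.
by rewrite /conv /= mulr_sumr; apply: eq_bigr => a _; rewrite mulrA.
Qed.

Lemma convNl (f g : part -> rat) : (\- f) ⋆ g = \- (f ⋆ g).
Proof.
apply: functional_extensionality => la.
by rewrite /conv /= -sumrN; apply: eq_bigr => a _; rewrite mulNr.
Qed.

Lemma convNr (f g : part -> rat) : f ⋆ (\- g) = \- (f ⋆ g).
Proof. by rewrite convC convNl convC. Qed.

Lemma odotE (f g : part -> rat) : odot f g = f ⋆ (g ⋆ mu).
Proof.
apply: functional_extensionality => la; rewrite /odot /conv.
apply: eq_bigr => a _; rewrite mulr_sumr; apply: eq_bigr => b _.
rewrite mulrA; congr (_ * mu _); apply: partP => n n_gt0.
by rewrite r_mkpart // !count_mem_mdiff !r_diff.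
Qed.

(** * Moebius inversion *)

(* A sign-reversing involution: adds or removes one copy of [x], and fixes the
   partitions in which [x] is repeated, where [mu] vanishes anyway. *)
Definition toggle x (a : part) : part :=
  if r x a == 0%N then mkpart (x :: a)
  else if r x a == 1%N then mkpart (rem x a) else a.

Lemma r_toggle x n (a : part) : (0 < x)%N ->
  r n (toggle x a) = if (n == x) && (r x a <= 1)%N then (1 - r x a)%N else r n a.
Proof.
move=> x_gt0; have [-> | n_gt0] := posnP n; first by rewrite !r0 eq_sym gtn_eqF.
rewrite /toggle; case: (n =P x) => [-> | /eqP n_x] /=.
  case: eqP => [rx0 | rx_neq0]; first by rewrite r_mkpart //= eqxx add1n -/(r x a) rx0.
  case: eqP => [rx1 | rx_gt1]; first by rewrite r_mkpart // count_mem_rem eqxx -/(r x a) rx1.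
  by case: leqP => // ?; lia.
case: ifP => _; first by rewrite r_mkpart //= eq_sym (negbTE n_x).
by case: ifP => _; rewrite ?r_mkpart // count_mem_rem eq_sym (negbTE n_x) subn0.
Qed.

Lemma toggleK x : (0 < x)%N -> involutive (toggle x).
Proof.
move=> x_gt0 a; apply: partP => n _; rewrite !r_toggle // eqxx /=.
by case: (n =P x) => [-> | _] //=; case: (leqP (r x a) 1) => rx /=;
  [rewrite leq_subr; lia | rewrite leqNgt rx].
Qed.

Lemma subpart_toggle x (la a : part) : (0 < x)%N -> x \in pval la ->
  subpart a la -> subpart (toggle x a) la.
Proof.
rewrite -r_gt0 => x_gt0 x_la a_la n; rewrite r_toggle //.
by case: (n =P x) => [-> | _] //=; case: ifP => // _; lia.
Qed.

Lemma mu_mkpart (s : seq nat) : all (fun x => 0 < x)%N s ->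
  mu (mkpart s) = if uniq s then (-1) ^+ size s else 0.
Proof.
move=> s_gt0; have s_perm : perm_eq (mkpart s) s by rewrite /= (all_filterP s_gt0) perm_sort.
by rewrite /mu (perm_uniq s_perm) (perm_size s_perm).
Qed.

Lemma mu_toggle x (a : part) : (0 < x)%N -> mu (toggle x a) = - mu a.
Proof.
move=> x_gt0; rewrite /toggle; case: eqP => [rx0 | rx_neq0]; last case: eqP => [rx1 | rx_gt1].
- have x_a : x \notin pval a by rewrite -r_gt0 rx0.
  rewrite mu_mkpart /= ?x_gt0 ?part_gt0 // x_a /mu.
  by case: uniq; rewrite ?oppr0 // exprS mulN1r.
- have x_a : x \in pval a by rewrite -r_gt0 rx1.
  have x_rem : x \notin rem x a.
    by apply/count_memPn; rewrite count_mem_rem -/(r x a) rx1 eqxx.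
  rewrite mu_mkpart; last by apply/allP => y /mem_rem; apply: (allP (part_gt0 a)).
  have a_perm := perm_to_rem x_a; rewrite /mu (perm_uniq a_perm) (perm_size a_perm) /= x_rem.
  by case: uniq; rewrite ?oppr0 // exprS mulN1r opprK.
- rewrite /mu; case a_uniq: (uniq a); rewrite ?oppr0 //.
  by have := count_uniq_mem x a_uniq; case: (x \in pval a).
Qed.

Lemma conv_mu_one : mu ⋆ one = delta.
Proof.
apply: functional_extensionality => -[[|x s] la_part].
  have -> : Part la_part = empty_part by apply: val_inj.
  by rewrite /conv /delta eqxx big_seq1 mulr1.
set la := Part la_part; have x_la : x \in pval la by rewrite mem_head.
have x_gt0 : (0 < x)%N by apply: (allP (part_gt0 la)).
have -> : delta la = 0.
  by rewrite /delta; case: eqP => // la0; move: x_la; rewrite -r_gt0 la0 r_empty.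
have sum_opp : (mu ⋆ one) la = - (mu ⋆ one) la.
  rewrite /conv -sumrN -(big_submultisets_involution _ (h := toggle x)) => [|a|a _].
  - by apply: eq_bigr => a _; rewrite mu_toggle // mulNr.
  - exact: subpart_toggle.
  - exact: toggleK.
by move/eqP: sum_opp; rewrite -addr_eq0 -mulr2n mulrn_eq0 => /eqP.
Qed.

Lemma conv_one_mu : one ⋆ mu = delta.
Proof. by rewrite convC conv_mu_one. Qed.

Lemma odot1l (f : part -> rat) : odot one f = f.
Proof. by rewrite odotE convA (convC one) -convA conv_one_mu conv_delta. Qed.

Lemma odot1r (f : part -> rat) : odot f one = f.
Proof. by rewrite odotE conv_one_mu conv_delta. Qed.

(** * Functions supported on rectangular partitions *)

Definition rect (n i : nat) : part := mkpart (nseq i n).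

Definition rectf (v : nat -> nat -> rat) (a : part) : rat :=
  if undup (pval a) is [:: n] then v n (size a) else 0.

Lemma rectE n i : (0 < n)%N -> pval (rect n i) = nseq i n.
Proof.
move=> n_gt0; rewrite /= (all_filterP _) ?all_nseq ?n_gt0 ?orbT //.
by apply: sorted_sort; [exact: rev_trans leq_trans | elim: i => [|[|i] IHi] //=; rewrite leqnn].
Qed.

Lemma rectf_rect v n i : (0 < n)%N -> (0 < i)%N -> rectf v (rect n i) = v n i.
Proof. by move=> n_gt0; case: i => // i _; rewrite /rectf rectE // undup_nseq size_nseq. Qed.

Lemma r_rect k n i : (0 < n)%N -> r k (rect n i) = ((k == n) * i)%N.
Proof. by move=> n_gt0; rewrite /r rectE // count_nseq eq_sym. Qed.

Lemma rect_inj n n' i i' : (0 < n)%N -> (0 < n')%N -> (0 < i)%N ->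
  rect n i = rect n' i' -> n = n' /\ i = i'.
Proof.
move=> n_gt0 n'_gt0 i_gt0 /(congr1 pval); rewrite !rectE // => eq_nseq.
have := congr1 size eq_nseq; rewrite !size_nseq => eq_i; subst i'.
by case: i i_gt0 eq_nseq => // i _ [->].
Qed.

Definition rectangular (a : part) : bool := size (undup (pval a)) == 1%N.

Lemma rectangularP (a : part) :
  rectangular a -> exists2 n, (0 < n)%N & a = rect n (size a).
Proof.
rewrite /rectangular; case undup_a: (undup (pval a)) => [|n []] // _.
have n_gt0 : (0 < n)%N by apply: (allP (part_gt0 a)); rewrite -mem_undup undup_a mem_head.
exists n => //; apply: val_inj; change (pval a = pval (rect n (size a))).
by rewrite rectE //; apply: undup_eq_seq1.
Qed.

Lemma mem_rect_submultisets (la : part) :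
  [seq rect p.1 p.2 | p <- [seq (n, i) | n <- undup (pval la), i <- iota 1 (r n la)]]
  =i [seq a <- submultisets la | rectangular a].
Proof.
move=> a; rewrite mem_filter; apply/mapP/andP => [[_ /allpairsPdep[n [i [n_la i_r ->]]] ->] | ].
  have n_gt0 : (0 < n)%N by move: n_la; rewrite mem_undup; apply: (allP (part_gt0 la)).
  rewrite mem_iota in i_r; split.
    by case: i i_r => // i _; rewrite /rectangular rectE // undup_nseq.
  apply/mem_submultisets => k /=; rewrite r_rect //.
  by case: eqP => [-> | _]; rewrite ?mul1n ?mul0n; lia.
case=> a_rect /mem_submultisets a_la.
have a_gt0 : (0 < size a)%N by apply: leq_trans (size_undup a); rewrite (eqP a_rect).
have [n n_gt0 a_eq] := rectangularP a_rect.
have r_a : r n a = size a by rewrite {1}a_eq r_rect // eqxx mul1n.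
exists (n, size a) => //; apply/allpairsPdep; exists n, (size a).
by split=> //; have := a_la n; rewrite r_a ?mem_undup -?r_gt0 ?mem_iota; lia.
Qed.

Lemma conv_rectf_one (v : nat -> nat -> rat) (la : part) :
  (rectf v ⋆ one) la = \sum_(n <- undup (pval la)) \sum_(i <- iota 1 (r n la)) v n i.
Proof.
rewrite /conv (eq_bigr (rectf v)) => [|a _]; last exact: mulr1.
rewrite (bigID rectangular) /= [X in _ + X]big1 ?addr0 => [|a]; last first.
  by rewrite /rectangular /rectf; case: undup => [|? []].
rewrite -big_filter -(big_reindex_uniq _ (h := fun p => rect p.1 p.2)
  (s := [seq (n, i) | n <- undup (pval la), i <- iota 1 (r n la)])).
- rewrite big_allpairs_dep; apply: eq_big_seq => n; rewrite mem_undup => n_la.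
  apply: eq_big_seq => i; rewrite mem_iota => /andP[i_gt0 _].
  by rewrite rectf_rect //; apply: (allP (part_gt0 la)).
- by rewrite uniq_pairs_dep ?undup_uniq // => n; exact: iota_uniq.
- by rewrite filter_uniq.
- move=> _ _ /allpairsPdep[n [i [n_la i_r ->]]] /allpairsPdep[n' [i' [n'_la _ ->]]] /=.
  move: n_la n'_la i_r; rewrite !mem_undup mem_iota => /(allP (part_gt0 la)) n_gt0.
  by move/(allP (part_gt0 la)) => n'_gt0 /andP[i_gt0 _] /rect_inj[] // -> ->.
- exact: mem_rect_submultisets.
Qed.

(** * Additive weights and their connected products *)

Section AdditiveWeight.

Variable w : part -> rat.
Hypothesis w_split : forall la a, subpart a la -> w la = w a + w (part_diff la a).

Lemma weight_delta : w \* delta = \0.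
Proof.
apply: functional_extensionality => la /=; rewrite /delta.
have [-> | _] := eqVneq la empty_part; last by rewrite mulr0.
have := w_split (la := empty_part) (a := empty_part) (fun _ => leqnn _).
have -> : part_diff empty_part empty_part = empty_part by apply/eqP; rewrite part_diff_eq0.
by rewrite -{1}[w _]addr0 => /addrI <-; rewrite mul0r.
Qed.

Lemma weight_conv (f g : part -> rat) : w \* (f ⋆ g) = (w \* f) ⋆ g \+ f ⋆ (w \* g).
Proof.
apply: functional_extensionality => la; rewrite /conv /= mulr_sumr -big_split /=.
by apply: eq_big_seq => a /mem_submultisets a_la; rewrite (w_split a_la); ring.
Qed.

Lemma weight_mu : w \* mu = \- (w ⋆ mu ⋆ mu).
Proof.
have wmu_one : (w \* mu) ⋆ one = \- (mu ⋆ w).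
  have w_one : w \* one = w by apply: functional_extensionality => la; exact: mulr1.
  apply: functional_extensionality => la.
  have := congr1 (fun F => F la) (weight_conv mu one).
  by rewrite conv_mu_one weight_delta w_one /= => /esym/eqP; rewrite addr_eq0 => /eqP.
rewrite -[w \* mu]conv_delta -conv_mu_one [mu ⋆ one]convC convA wmu_one convNl.
by rewrite [mu ⋆ w]convC.
Qed.

Lemma odot_mu : odot w mu = \- (w \* mu).
Proof.
rewrite weight_mu odotE convA.
by apply: functional_extensionality => la /=; rewrite opprK.
Qed.

Definition connected (f : part -> rat) : part -> rat := w \* f \- odot w f.

Lemma connectedE (f : part -> rat) : connected f = (w \* (f ⋆ mu)) ⋆ one.
Proof.
rewrite /connected odotE weight_conv weight_mu convDl -convA conv_mu_one conv_delta.
rewrite convNr convNl (convA f) -convA conv_mu_one conv_delta.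
by rewrite (convA f w) (convC f w) -convA.
Qed.

Lemma connected_linear (c : rat) (f g : part -> rat) :
  connected (c \*o f \+ g) = c \*o connected f \+ connected g.
Proof.
rewrite !connectedE -convZl -convDl; congr (_ ⋆ _).
by rewrite convDl convZl; apply: functional_extensionality => la /=; rewrite mulrDr mulrCA.
Qed.

Lemma connected_odot (f g : part -> rat) :
  connected (odot f g) = odot (connected f) g \+ odot f (connected g).
Proof.
rewrite !odotE !connectedE; set G := g ⋆ mu.
rewrite -(convA f G) (convC G) convA weight_conv convDl.
congr (_ \+ _); first by rewrite -convA (convC G) convA.
by rewrite -!convA (convC mu) -!convA.
Qed.

Lemma connected_conv_one (f : part -> rat) : connected (f ⋆ one) = (w \* f) ⋆ one.
Proof. by rewrite connectedE -convA conv_one_mu conv_delta. Qed.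

Lemma connected_one : connected one = \0.
Proof.
rewrite connectedE conv_one_mu weight_delta.
by apply: functional_extensionality => la; rewrite /conv big1 // => a _; rewrite mul0r.
Qed.

End AdditiveWeight.

Lemma S0E m (la : part) : S0 m la = \sum_(x <- pval la) (x ^ (m - 1))%:R.
Proof. by rewrite /S0 /S big_nil addr0 addrC addKr. Qed.

Lemma S0_split m (la a : part) : subpart a la -> S0 m la = S0 m a + S0 m (part_diff la a).
Proof. by move=> a_la; rewrite !S0E -big_cat; apply/perm_big/perm_part_diff. Qed.

Lemma conn_connected m (f : part -> rat) : conn m f = connected (S0 m) f.
Proof.
have S_split : S m = S m empty_part \*o one \+ S0 m.
  by apply: functional_extensionality => la; rewrite /S0 /= mulr1 addrC subrK.
apply: functional_extensionality => la.
rewrite /conn /connected {1 2}S_split !odotE convDl convZl -odotE odot1l /=.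
by ring.
Qed.

Lemma T_split k l :
  T k l = T k l empty_part \*o one \+ rectf (fun n i => (n ^ k * i ^ (l - 1))%:R) ⋆ one.
Proof.
apply: functional_extensionality => la; rewrite /= conv_rectf_one mulr1 {2}/T big_nil addr0.
rewrite /T; congr (_ + _); apply: eq_bigr => n _.
by rewrite /F mulr_sumr /index_iota subn1; apply: eq_bigr => i _; rewrite natrM.
Qed.

Lemma S0_rectf m (v : nat -> nat -> rat) :
  S0 m \* rectf v = rectf (fun n i => (n ^ (m - 1))%:R *+ i * v n i).
Proof.
apply: functional_extensionality => a /=; rewrite /rectf.
case undup_a: (undup (pval a)) => [|n []]; rewrite ?mulr0 //.
by rewrite S0E (undup_eq_seq1 undup_a) big_nseq iter_addr_0 size_nseq.
Qed.

Lemma conn_T m k l : (2 <= m)%N -> (0 < l)%N -> conn m (T k l) = T (k + m - 1) l.+1.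
Proof.
move=> m_ge2 l_gt0; have S0_add := @S0_split m.
have T_empty : T (k + m - 1) l.+1 empty_part = 0.
  rewrite /T; have -> : (k + m - 1 == 0)%N = false by apply/eqP; lia.
  by rewrite big_nil addr0 eqSS (gtn_eqF l_gt0) addr0 mulr0.
have exponents : (fun n i => (n ^ (m - 1))%:R *+ i * (n ^ k * i ^ (l - 1))%:R) =
                 (fun n i => (n ^ (k + m - 1) * i ^ (l.+1 - 1))%:R :> rat).
  apply: functional_extensionality => n; apply: functional_extensionality => i.
  rewrite -mulr_natr -!natrM; congr _%:R.
  have -> : (k + m - 1 = k + (m - 1))%N by lia.
  have -> : (l.+1 - 1 = (l - 1).+1)%N by lia.
  by rewrite expnD expnS; ring.
rewrite conn_connected T_split (connected_linear S0_add) (connected_one S0_add).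
rewrite (connected_conv_one S0_add) S0_rectf exponents [RHS]T_split T_empty.
by apply: functional_extensionality => la /=; rewrite mulr0 mul0r !add0r.
Qed.

Definition inT_derivation (D : (part -> rat) -> part -> rat) : Prop :=
  (forall (c : rat) f g, inT f -> inT g -> D (c \*o f \+ g) = c \*o D f \+ D g) /\
  (forall f g, inT f -> inT g -> D (odot f g) = odot (D f) g \+ odot f (D g)).

Lemma inT_derivation_one D : inT_derivation D -> D one = \0.
Proof.
case=> _ /(_ _ _ inT1 inT1); rewrite odot1l odot1r odot1l => D1.
apply: functional_extensionality => la; have /= := congr1 (fun F => F la) D1.
by rewrite -{1}[D one la]addr0 => /addrI <-.
Qed.

Lemma inT_derivation_eq D1 D2 : inT_derivation D1 -> inT_derivation D2 ->
  (forall k l, (0 < l)%N -> D1 (T k l) = D2 (T k l)) ->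
  forall f, inT f -> D1 f = D2 f.
Proof.
move=> D1_der D2_der eq_T ?; case: (D1_der) (D2_der) => [D1_lin D1_odot] [D2_lin D2_odot].
elim=> [| k l /eq_T // | f g f_in IHf g_in IHg | c f f_in IHf | f g f_in IHf g_in IHg].
- by rewrite !inT_derivation_one.
- have -> : (fun la => f la + g la) = 1 \*o f \+ g.
    by apply: functional_extensionality => la; rewrite /= mul1r.
  by rewrite D1_lin // D2_lin // IHf IHg.
- have -> : (fun la => c * f la) = (c - 1) \*o f \+ f.
    by apply: functional_extensionality => la; rewrite /= mulrBl mul1r subrK.
  by rewrite D1_lin // D2_lin // IHf.
- by rewrite D1_odot // D2_odot // IHf IHg.
Qed.

Theorem lemma5p1p2 (m : nat) : (2 <= m)%N -> ~~ odd m ->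
  (* (1) S_m^0 . mu = - S_m^0 mu *)
  (forall la, odot (S0 m) mu la = - (S0 m la * mu la)) /\
  (* (2a) f |-> S_m | f is Q-linear *)
  (forall (a : rat) (f g : part -> rat),
     conn m (fun la => a * f la + g la) = (fun la => a * conn m f la + conn m g la)) /\
  (* (2b) Leibniz rule for the induced product *)
  (forall f g,
     conn m (odot f g) = (fun la => odot (conn m f) g la + odot f (conn m g) la)) /\
  (* (2c) values on the generators *)
  (forall k l, (0 < l)%N -> conn m (T k l) = T (k + m - 1) l.+1) /\
  (* (2d) uniqueness on the algebra generated by the T_{k,l} *)
  (forall D : (part -> rat) -> part -> rat,
     (forall (a : rat) f g, inT f -> inT g ->
        D (fun la => a * f la + g la) = (fun la => a * D f la + D g la)) ->
     (forall f g, inT f -> inT g ->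
        D (odot f g) = (fun la => odot (D f) g la + odot f (D g) la)) ->
     (forall k l, (0 < l)%N -> D (T k l) = T (k + m - 1) l.+1) ->
     forall f, inT f -> D f = conn m f).
Proof.
move=> m_ge2 _; have S0_add := @S0_split m.
have conn_linear c f g : conn m (c \*o f \+ g) = c \*o conn m f \+ conn m g.
  by rewrite !conn_connected (connected_linear S0_add).
have conn_odot f g : conn m (odot f g) = odot (conn m f) g \+ odot f (conn m g).
  by rewrite !conn_connected (connected_odot S0_add).
split; first by move=> la; rewrite (odot_mu S0_add).
split; first exact: conn_linear.
split; first exact: conn_odot.
split; first by move=> k l; apply: conn_T.
move=> D D_linear D_odot D_T; apply: inT_derivation_eq => [||k l l_gt0].
- by split; [exact: D_linear | exact: D_odot].
- by split=> *; [exact: conn_linear | exact: conn_odot].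
- by rewrite D_T // conn_T.
Qed.
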